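(* Let $D>0$ be an integer with $D\equiv0$ or $1\pmod 4$, let $\varepsilon\in\{\pm1\}$, let $m\in\mathbb{Z}_{>0}$, and suppose $v\in\mathbb{Z}$ satisfies $v^2=m(mD+4\varepsilon)$. Then $m$ is a perfect square. *)

From Stdlib Require Import ZArith.
Open Scope Z_scope.

(* If m is odd, m and m D + 4 eps are coprime, so their product being a square
   forces m to be a square.  If m = 4 n, then 4 | v and n (n D + eps) is a
   square with coprime factors.  If m = 2 mod 4, then v^2 = 4 D + 8 mod 16,
   which is 8 or 12 and never a square residue. *)

From Stdlib Require Import ZArith Znumtheory Lia.
Open Scope Z_scope.

Lemma gcd_square x y : Z.gcd (x ^ 2) (y ^ 2) = Z.gcd x y ^ 2.
Proof.
  set (g := Z.gcd x y).
  destruct (Z.gcd_divide_l x y) as [x' Hx], (Z.gcd_divide_r x y) as [y' Hy].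
  fold g in Hx, Hy.
  destruct (Z.eq_dec g 0) as [Hg0 | Hg0].
  { rewrite Hx, Hy, Hg0, !Z.mul_0_r. reflexivity. }
  assert (Hcop : Z.gcd x' y' = 1).
  { apply (Z.mul_reg_r _ _ g Hg0).
    rewrite Z.mul_1_l, <- Z.gcd_mul_mono_r_nonneg by apply Z.gcd_nonneg.
    now rewrite <- Hx, <- Hy. }
  assert (Hcop2 : Z.gcd (x' ^ 2) (y' ^ 2) = 1).
  { apply Zgcd_1_rel_prime in Hcop. apply Zgcd_1_rel_prime.
    rewrite !Z.pow_2_r.
    apply rel_prime_mult; apply rel_prime_sym, rel_prime_mult; apply rel_prime_sym;
      exact Hcop. }
  rewrite Hx, Hy, !Z.pow_mul_l, Z.gcd_mul_mono_r_nonneg, Hcop2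
    by apply Z.pow_nonneg, Z.gcd_nonneg.
  ring.
Qed.

Lemma coprime_mul_square_l a b c :
  0 < a -> Z.gcd a b = 1 -> a * b = c ^ 2 -> a = Z.gcd a c ^ 2.
Proof.
  intros Ha Hab Hc.
  rewrite <- gcd_square, <- Hc, Z.pow_2_r, Z.gcd_mul_mono_l_nonneg, Hab by lia.
  ring.
Qed.

Lemma gcd_mul_add_r a d e : Z.gcd a (a * d + e) = Z.gcd a e.
Proof. rewrite Z.add_comm, Z.mul_comm. apply Z.gcd_add_mult_diag_r. Qed.

Lemma gcd_mul_unit_r a b e : e = 1 \/ e = -1 -> Z.gcd a (b * e) = Z.gcd a b.
Proof.
  intros [-> | ->].
  - now rewrite Z.mul_1_r.
  - replace (b * -1) with (- b) by ring. apply Z.gcd_opp_r.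
Qed.

(* Squares mod 16 depend only on the residue mod 8, leaving eight cases. *)
Lemma square_mod_16 x :
  x ^ 2 mod 16 = 0 /\ x mod 4 = 0 \/
  x ^ 2 mod 16 = 1 \/ x ^ 2 mod 16 = 4 \/ x ^ 2 mod 16 = 9.
Proof.
  pose proof (Z.div_mod x 8 ltac:(lia)) as Hx.
  pose proof (Z.mod_pos_bound x 8 ltac:(lia)) as Hr.
  set (a := x / 8) in *; set (r := x mod 8) in *; clearbody a r; subst x.
  replace ((8 * a + r) ^ 2) with (r ^ 2 + (4 * a ^ 2 + a * r) * 16) by ring.
  replace (8 * a + r) with (r + (2 * a) * 4) by ring.
  rewrite !Z_mod_plus_full.
  assert (r = 0 \/ r = 1 \/ r = 2 \/ r = 3 \/ r = 4 \/ r = 5 \/ r = 6 \/ r = 7)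
    as Hcases by lia.
  repeat destruct Hcases as [-> | Hcases]; try subst r; compute; tauto.
Qed.

Lemma gcd_4_of_odd m : m mod 4 = 1 \/ m mod 4 = 3 -> Z.gcd m 4 = 1.
Proof.
  intros Hm. rewrite Z.gcd_comm, <- Z.gcd_mod by lia.
  now destruct Hm as [-> | ->].
Qed.

Section Solution.

Variables D eps m v : Z.
Hypothesis heps : eps = 1 \/ eps = -1.
Hypothesis hv : v ^ 2 = m * (m * D + 4 * eps).

Lemma solution_odd_square :
  0 < m -> m mod 4 = 1 \/ m mod 4 = 3 -> m = Z.gcd m v ^ 2.
Proof.
  intros hm hodd.
  apply (coprime_mul_square_l m (m * D + 4 * eps)); [exact hm | | now symmetry].
  rewrite gcd_mul_add_r, gcd_mul_unit_r by exact heps.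
  now apply gcd_4_of_odd.
Qed.

Lemma solution_mod_4_eq_0_square :
  0 < m -> m mod 4 = 0 -> exists k, m = k ^ 2.
Proof.
  intros hm hm4.
  pose proof (Z.div_mod m 4 ltac:(lia)) as Em; rewrite hm4, Z.add_0_r in Em.
  set (n := m / 4) in *; clearbody n; subst m.
  assert (Hv16 : v ^ 2 = 16 * (n * (n * D + eps))) by (rewrite hv; ring).
  assert (Hv4 : v mod 4 = 0).
  { destruct (square_mod_16 v) as [[_ H] | H]; [exact H |].
    rewrite Hv16, Z.mul_comm, Z.mod_mul in H by lia. lia. }
  pose proof (Z.div_mod v 4 ltac:(lia)) as Ev; rewrite Hv4, Z.add_0_r in Ev.
  set (w := v / 4) in *; clearbody w; subst v.
  assert (Hn : n = Z.gcd n w ^ 2).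
  { apply (coprime_mul_square_l n (n * D + eps)); [lia | | nia].
    rewrite gcd_mul_add_r, <- (Z.mul_1_l eps), gcd_mul_unit_r by exact heps.
    apply Z.gcd_1_r. }
  exists (2 * Z.gcd n w).
  rewrite Z.pow_mul_l, <- Hn. ring.
Qed.

Lemma solution_not_mod_4_eq_2 :
  D mod 4 = 0 \/ D mod 4 = 1 -> m mod 4 <> 2.
Proof.
  intros hD hm4.
  pose proof (Z.div_mod m 4 ltac:(lia)) as Em; rewrite hm4 in Em.
  pose proof (Z.div_mod D 4 ltac:(lia)) as ED.
  set (q := m / 4) in *; set (r := D / 4) in *; set (s := D mod 4) in *.
  clearbody q r s.
  assert (Hk : exists k, v ^ 2 = 4 * s + 8 + 16 * k).
  { rewrite hv, Em, ED.
    destruct heps as [-> | ->].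
    - exists ((q ^ 2 + q) * (4 * r + s) + r + q). ring.
    - exists ((q ^ 2 + q) * (4 * r + s) + r - q - 1). ring. }
  destruct Hk as [k Hk].
  pose proof (Z.div_mod (v ^ 2) 16 ltac:(lia)) as Ev.
  destruct (square_mod_16 v) as [[Hsq _] | Hsq]; lia.
Qed.

End Solution.

Theorem mainTheorem9 (D eps m v : Z)
  (hD : 0 < D) (hDmod : D mod 4 = 0 \/ D mod 4 = 1)
  (heps : eps = 1 \/ eps = -1)
  (hm : 0 < m)
  (hv : v ^ 2 = m * (m * D + 4 * eps)) :
  exists k : Z, m = k ^ 2.
Proof.
  pose proof (Z.mod_pos_bound m 4 ltac:(lia)).
  assert (m mod 4 = 0 \/ m mod 4 = 2 \/ m mod 4 = 1 \/ m mod 4 = 3)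
    as [H0 | [H2 | Hodd]] by lia.
  - exact (solution_mod_4_eq_0_square D eps m v heps hv hm H0).
  - exfalso. exact (solution_not_mod_4_eq_2 D eps m v heps hv hDmod H2).
  - exists (Z.gcd m v). exact (solution_odd_square D eps m v heps hv hm Hodd).
Qed.
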